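(* Let $\Gamma$ be a distance-regular graph with diameter $D\ge 3$ and valency $k$, and assume $\Gamma$ is bipartite or almost bipartite. Then: (i) for every $\theta\in\mathbb{R}$ the pair $\theta,k$ is tight; (ii) for every $\theta\in\mathbb{R}$ the pair $\theta,-k$ is tight; (iii) $\Gamma$ has no further tight pairs, i.e. if $\theta,\theta'\in\mathbb{R}$ form a tight pair then at least one of $\theta,\theta'$ lies in $\{k,-k\}$.
   Context: $\Gamma$ is a finite connected undirected graph without loops or multiple edges, with path-length distance $\partial$ and diameter $D$; it is distance-regular with intersection numbers $a_i=p^i_{1i}$, $b_i=p^i_{1,i+1}$, $c_i=p^i_{1,i-1}$ (with $c_0=0$, $b_D=0$), valency $k=b_0$, and $c_i+a_i+b_i=k$ for $0\le i\le D$. $\Gamma$ is bipartite if $a_i=0$ for $0\le i\le D$; almost bipartite if $a_D\ne 0$ and $a_i=0$ for $0\le i\le D-1$. For $\theta\in\mathbb{R}$, the pseudo cosine sequence for $\theta$ is the unique sequence of reals $\sigma_0,\dots,\sigma_D$ with $\sigma_0=1$ and $c_i\sigma_{i-1}+a_i\sigma_i+b_i\sigma_{i+1}=\theta\sigma_i$ for $0\le i\le D-1$ ($\sigma_{-1}$ indeterminate, as $c_0=0$); then $\theta=k\sigma_1$. A sequence is a pseudo cosine sequence if it is the pseudo cosine sequence for some real $\theta$. Two pseudo cosine sequences $\sigma_0,\dots,\sigma_D$ and $\rho_0,\dots,\rho_D$ form a tight pair if $\sigma_0\rho_0,\sigma_1\rho_1,\dots,\sigma_D\rho_D$ is a pseudo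 cosine sequence. Two reals $\theta,\theta'$ form a tight pair if their pseudo cosine sequences form a tight pair. *)

From HB Require Import structures.
From mathcomp Require Import all_boot all_order all_algebra.
From mathcomp Require Import reals.
Set Implicit Arguments. Unset Strict Implicit. Unset Printing Implicit Defensive.
Import Order.TTheory GRing.Theory Num.Theory.

(* A finite simple graph: vertex type T : finType, adjacency e : rel T
   (assumed symmetric and irreflexive in the theorem). *)
Section Graph.
Variables (T : finType) (e : rel T).

Fixpoint ball (n : nat) (x : T) : {set T} :=
  match n with
  | 0 => [set x]
  | n'.+1 => ball n' x :|: [set z | [exists w in ball n' x, e w z]]
  end.

(* path-length distance: least n with y in ball n x
   (for a connected graph this is < #|T|) *)
Definition dist (x y : T) : nat :=
  find (fun n => y \in ball n x) (iota 0 #|T|).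

Definition connected_graph : Prop := forall x y : T, connect e x y.

Definition pcount (x y : T) (i j : nat) : nat :=
  #|[set z | (dist x z == i) && (dist y z == j)]|.

Definition distance_regular : Prop :=
  connected_graph /\
  forall x y x' y', dist x y = dist x' y' ->
    forall i j, pcount x y i j = pcount x' y' i j.

Definition inum (h i j : nat) : nat :=
  match [pick xy : T * T | dist xy.1 xy.2 == h] with
  | Some xy => pcount xy.1 xy.2 i j
  | None => 0
  end.

Definition ai (i : nat) : nat := inum i 1 i.
Definition bi (i : nat) : nat := inum i 1 i.+1.
Definition ci (i : nat) : nat := inum i 1 i.-1.
Definition valency : nat := bi 0.

Definition diameter : nat := \max_(xy : T * T) dist xy.1 xy.2.

Definition bipartite_drg : Prop := forall i, i <= diameter -> ai i = 0.
Definition almost_bipartite_drg : Prop :=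
  ai diameter <> 0 /\ forall i, i < diameter -> ai i = 0.

Local Open Scope ring_scope.
Variable R : realType.

(* s is the pseudo cosine sequence for theta (only s_0..s_D matter);
   at i = 0 the term c_0 * s_{-1} vanishes since c_0 = 0. *)
Definition is_pcs (theta : R) (s : nat -> R) : Prop :=
  s 0%N = 1 /\
  forall i : nat, (i < diameter)%N ->
    (ci i)%:R * s i.-1 + (ai i)%:R * s i + (bi i)%:R * s i.+1 = theta * s i.

Definition is_pseudo_cosine_seq (s : nat -> R) : Prop :=
  exists theta : R, is_pcs theta s.

Definition tight_pair_seq (s r : nat -> R) : Prop :=
  [/\ is_pseudo_cosine_seq s, is_pseudo_cosine_seq r &
      is_pseudo_cosine_seq (fun i => s i * r i)].

Definition tight_pair (theta theta' : R) : Prop :=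
  exists s r : nat -> R,
    [/\ is_pcs theta s, is_pcs theta' r & tight_pair_seq s r].

End Graph.

From HB Require Import structures.
From mathcomp Require Import all_boot all_order all_algebra.
From mathcomp Require Import reals.
From mathcomp Require Import zify ring.
Import Order.TTheory GRing.Theory Num.Theory.
Set Implicit Arguments. Unset Strict Implicit. Unset Printing Implicit Defensive.

(* Since a_i = 0 for i < D and only the recurrences for i < D constrain a
   pseudo cosine sequence, c_i + b_i = k there: the constant sequence 1 is the
   pseudo cosine sequence for k, and multiplying the one for theta by (-1)^i
   gives the one for -theta.  This yields the tight pairs theta, k and
   theta, -k.  Conversely the recurrences at i = 0, 1 read k s_1 = theta and
   b_1 s_2 = k s_1^2 - c_1; writing them for s, r and s r and eliminating
   s_2, r_2 with b_1 = k - c_1 leaves c_1 k (s_1^2 - 1)(r_1^2 - 1) = 0, so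
   s_1 or r_1 is +-1, i.e. theta or theta' is +-k. *)

Section Distance.
Variables (T : finType) (e : rel T).
Hypotheses (esym : symmetric e) (eirr : irreflexive e).

Lemma mem_ball0 x z : (z \in ball e 0 x) = (z == x).
Proof. by rewrite inE. Qed.

Lemma mem_ballS_adj n x w z : w \in ball e n x -> e w z -> z \in ball e n.+1 x.
Proof.
by move=> wx ewz; rewrite !inE; apply/orP; right; apply/existsP; exists w; rewrite wx.
Qed.

Lemma mem_ballSP n x z : z \in ball e n.+1 x ->
  z \in ball e n x \/ exists2 w, w \in ball e n x & e w z.
Proof.
by rewrite !inE => /orP[->|/existsP[w /andP[wx ewz]]]; [left | right; exists w].
Qed.

Lemma subset_ball m n x : (m <= n)%N -> ball e m x \subset ball e n x.
Proof.
move=> /subnK <-; elim: (n - m)%N => [|d IH]; first exact: subxx.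
by apply: subset_trans IH _; rewrite addSn /= subsetUl.
Qed.

Lemma mem_ball_last x p : path e x p -> last x p \in ball e (size p) x.
Proof.
elim/last_ind: p => [|p z IH]; first by rewrite mem_ball0.
rewrite rcons_path last_rcons size_rcons => /andP[/IH px ez].
exact: mem_ballS_adj px ez.
Qed.

Lemma mem_ballS_adjl n x y w : e y w -> x \in ball e n w -> x \in ball e n.+1 y.
Proof.
move=> eyw; elim: n x => [|n IH] x.
  by rewrite mem_ball0 => /eqP->; apply: mem_ballS_adj eyw; rewrite mem_ball0.
case/mem_ballSP => [/IH|[u /IH uy eux]]; last exact: mem_ballS_adj uy eux.
exact/subsetP/subset_ball.
Qed.

Lemma mem_ball_sym n x y : y \in ball e n x -> x \in ball e n y.
Proof.
elim: n y => [|n IH] y; first by rewrite !mem_ball0 eq_sym.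
case/mem_ballSP => [/IH|[w /IH wy ewy]]; first exact/subsetP/subset_ball.
by apply: mem_ballS_adjl wy; rewrite esym.
Qed.

Hypothesis conn : connected_graph e.

Lemma mem_ball_card x y : exists2 n, (n < #|T|)%N & y \in ball e n x.
Proof.
case/connectP: (conn x y) => p xp ->; case: (shortenP xp) => q xq uq _.
exists (size q); last exact: mem_ball_last.
by have := max_card (mem (x :: q)); rewrite (card_uniqP uq) /=.
Qed.

Lemma leq_distE x y n : (dist e x y <= n)%N = (y \in ball e n x).
Proof.
have has_ball : has (fun n => y \in ball e n x) (iota 0 #|T|).
  by case: (mem_ball_card x y) => m lt ym; apply/hasP; exists m; rewrite ?mem_iota.
have dist_lt : (dist e x y < #|T|)%N by move: has_ball; rewrite has_find size_iota.
apply/idP/idP => [le|yn].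
  apply: (subsetP (subset_ball x le)).
  by have := nth_find 0 has_ball; rewrite nth_iota.
rewrite leqNgt; apply/negP => lt.
by have := before_find 0 lt; rewrite nth_iota ?yn //; apply: ltn_trans dist_lt.
Qed.

Lemma mem_ball_dist x y : y \in ball e (dist e x y) x.
Proof. by rewrite -leq_distE. Qed.

Lemma dist_sym x y : dist e x y = dist e y x.
Proof.
by apply/eqP; rewrite eqn_leq !leq_distE !(mem_ball_sym (mem_ball_dist _ _)).
Qed.

Lemma dist_eq0 x y : (dist e x y == 0)%N = (y == x).
Proof. by rewrite -leqn0 leq_distE mem_ball0. Qed.

Lemma distxx x : dist e x x = 0%N.
Proof. by apply/eqP; rewrite dist_eq0. Qed.

Lemma leq_dist_adj x w z : e w z -> (dist e x z <= (dist e x w).+1)%N.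
Proof. by move=> ewz; rewrite leq_distE (mem_ballS_adj (mem_ball_dist _ _) ewz). Qed.

Lemma dist_eq1 x z : (dist e x z == 1)%N = e x z.
Proof.
apply/idP/idP => [/eqP dxz|exz].
  have := mem_ball_dist x z; rewrite dxz; case/mem_ballSP => [|[w]].
    by rewrite mem_ball0 => /eqP zx; move: dxz; rewrite zx distxx.
  by rewrite mem_ball0 => /eqP->.
have : (dist e x z <= 1)%N by rewrite leq_distE (mem_ballS_adj _ exz) ?mem_ball0.
have : dist e x z != 0%N by rewrite dist_eq0; apply: contraTneq exz => ->; rewrite eirr.
lia.
Qed.

Lemma distS_adj x z n : dist e x z = n.+1 -> exists2 w, e w z & dist e x w = n.
Proof.
move=> dxz; have := mem_ball_dist x z; rewrite dxz; case/mem_ballSP => [|[w wx ewz]].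
  by rewrite -leq_distE dxz ltnn.
exists w => //; move: wx; rewrite -leq_distE; have := leq_dist_adj x ewz; lia.
Qed.

Lemma dist_intermediate x u j : (j <= dist e x u)%N -> exists z, dist e x z = j.
Proof.
move dxu: (dist e x u) => m; elim: m u dxu => [|m IH] u dxu.
  by exists u; lia.
rewrite leq_eqVlt ltnS => /orP[/eqP->|]; first by exists u.
by case: (distS_adj dxu) => w _ /IH.
Qed.

Lemma dist_attained h : (h <= diameter e)%N -> (0 < diameter e)%N ->
  exists x y, dist e x y = h.
Proof.
move=> hD D_gt0; have [xy _ | T0] := pickP (fun _ : T * T => true); last first.
  by move: D_gt0; rewrite /diameter big_pred0.
have TT_gt0 : (0 < #|{: T * T}|)%N by apply/card_gt0P; exists xy.
case: (bigop.eq_bigmax (fun xy : T * T => dist e xy.1 xy.2) TT_gt0) => [[x y] /= dxy].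
have : (h <= dist e x y)%N by rewrite -dxy.
by case/dist_intermediate => z dxz; exists x, z.
Qed.

Hypothesis dr : forall x y x' y', dist e x y = dist e x' y' ->
  forall i j, pcount e x y i j = pcount e x' y' i j.

Lemma inumE h i j x y : dist e x y = h -> inum e h i j = pcount e x y i j.
Proof.
move=> dxy; rewrite /inum; case: pickP => [[a b] /= /eqP dab | none].
  by apply: dr; rewrite dab.
by have := none (x, y); rewrite /= dxy eqxx.
Qed.

Lemma card_set_nat (P : pred T) : #|[set z | P z]| = (\sum_z P z)%N.
Proof.
by rewrite -sum1_card big_mkcond; apply: eq_bigr => z _; rewrite inE; case: (P z).
Qed.

(* A neighbour z of x satisfies |dist y z - dist y x| <= 1, so it is counted
   by exactly one of c_i, a_i, b_i. *)
Lemma intersection_sum i : (1 <= i <= diameter e)%N ->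
  (ci e i + ai e i + bi e i)%N = valency e.
Proof.
case/andP=> i_gt0 iD; case: (dist_attained iD (leq_trans i_gt0 iD)) => x [y dxy].
rewrite /ci /ai /bi /valency /bi !(inumE _ _ dxy) (inumE _ _ (distxx x)).
rewrite /pcount !card_set_nat -!big_split /=; apply: eq_bigr => z _.
rewrite andbb dist_eq1; case exz: (e x z) => //=.
have := leq_dist_adj y exz; rewrite esym in exz; have := leq_dist_adj y exz.
by rewrite dist_sym; do ![case: eqP => ? /=]; lia.
Qed.

Lemma bi_gt0 i : (i < diameter e)%N -> (0 < bi e i)%N.
Proof.
move=> iD; case: (dist_attained iD (leq_ltn_trans (leq0n i) iD)) => u [z duz].
case: (distS_adj duz) => w ewz duw.
rewrite /bi (inumE _ _ (etrans (dist_sym w u) duw)) /pcount.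
by apply/card_gt0P; exists z; rewrite inE dist_eq1 ewz duz eqxx.
Qed.

Lemma ci1_gt0 : (0 < diameter e)%N -> (0 < ci e 1)%N.
Proof.
move=> D_gt0; case: (dist_attained D_gt0 D_gt0) => x [y dxy].
rewrite /ci (inumE _ _ dxy) /pcount.
by apply/card_gt0P; exists y; rewrite inE dxy distxx eqxx.
Qed.

End Distance.

Local Open Scope ring_scope.

(* (s_{n-1}, s_n) for the solution of c_n s_{n-1} + a_n s_n + b_n s_{n+1} =
   th s_n with s_0 = 1, using the junk value s_{-1} = 1. *)
Fixpoint recurrence_pair (R : fieldType) (c a b : nat -> R) (th : R) (n : nat) :
    R * R :=
  if n is n'.+1 then
    let p := recurrence_pair c a b th n' in
    (p.2, (th * p.2 - c n' * p.1 - a n' * p.2) / b n')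
  else (1, 1).

Lemma three_term_recurrence_solvable (R : fieldType) (D : nat)
    (c a b : nat -> R) (th : R) :
  (forall i, (i < D)%N -> b i != 0) ->
  exists s : nat -> R, s 0%N = 1 /\ forall i, (i < D)%N ->
    c i * s i.-1 + a i * s i + b i * s i.+1 = th * s i.
Proof.
move=> b_neq0; exists (fun n => (recurrence_pair c a b th n).2); split=> // i iD.
have -> : (recurrence_pair c a b th i.-1).2 = (recurrence_pair c a b th i).1.
  by case: i iD.
by rewrite /=; field; apply: b_neq0.
Qed.

Section PseudoCosine.
Variables (T : finType) (e : rel T) (R : realType).
Local Notation D := (diameter e).
Local Notation k := (valency e).

Hypothesis b_gt0 : forall i, (i < D)%N -> (0 < bi e i)%N.

Lemma is_pcs_exists (theta : R) : exists s, is_pcs e theta s.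
Proof.
have [i iD|s [s0 hs]] := @three_term_recurrence_solvable R D
  (fun i => (ci e i)%:R) (fun i => (ai e i)%:R) (fun i => (bi e i)%:R) theta.
  by rewrite pnatr_eq0 -lt0n b_gt0.
by exists s.
Qed.

Lemma eq_is_pcs (theta : R) s r : s =1 r -> is_pcs e theta s -> is_pcs e theta r.
Proof. by move=> sr [s0 hs]; split => [|i iD]; rewrite -!sr // hs. Qed.

Lemma tight_pair_intro (theta theta' theta'' : R) s r :
  is_pcs e theta s -> is_pcs e theta' r -> is_pcs e theta'' (fun i => s i * r i) ->
  tight_pair e theta theta'.
Proof.
move=> hs hr hsr; exists s, r; split=> //.
by split; [exists theta | exists theta' | exists theta''].
Qed.

(* Since 0.-1 = 0, ci e 0 is ai e 0, so a_eq0 also gives c_0 = 0. *)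
Hypothesis a_eq0 : forall i, (i < D)%N -> ai e i = 0%N.
Hypothesis cb_eq_k : forall i, (i < D)%N -> (ci e i + bi e i)%N = k.

Lemma is_pcs_valency : is_pcs e (k%:R : R) (fun=> 1).
Proof. by split=> // i iD; rewrite !mulr1 a_eq0 // addr0 -natrD cb_eq_k. Qed.

Lemma is_pcs_signM (theta : R) s :
  is_pcs e theta s -> is_pcs e (- theta) (fun i => (-1) ^+ i * s i).
Proof.
case=> s0 hs; split=> [|i iD]; first by rewrite s0 mulr1.
have := hs i iD; rewrite (a_eq0 iD) !mul0r !addr0.
case: i iD => [|i] iD /= hi; last first.
  have -> : - theta * ((-1) ^+ i.+1 * s i.+1) = (-1) ^+ i * (theta * s i.+1).
    by rewrite exprS; ring.
  by rewrite -hi !exprS; ring.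
by move: hi; rewrite [ci e 0](a_eq0 iD) s0 !mul0r !add0r mulr1 => <-; ring.
Qed.

Lemma tight_pair_valency (theta : R) : tight_pair e theta k%:R.
Proof.
have [s hs] := is_pcs_exists theta.
by apply: tight_pair_intro hs is_pcs_valency (eq_is_pcs _ hs) => i; rewrite mulr1.
Qed.

Lemma tight_pair_Nvalency (theta : R) : tight_pair e theta (- k%:R).
Proof.
have [s hs] := is_pcs_exists theta.
apply: tight_pair_intro hs (is_pcs_signM is_pcs_valency)
  (eq_is_pcs _ (is_pcs_signM hs)) => i.
by rewrite mulr1 mulrC.
Qed.

Hypothesis D_gt1 : (1 < D)%N.

Lemma is_pcs_eigenvalue (theta : R) s : is_pcs e theta s -> theta = k%:R * s 1%N.
Proof.
have D_gt0 : (0 < D)%N by apply: ltnW.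
case=> s0 /(_ 0%N D_gt0) /=; rewrite s0 !mulr1 [ci e 0](a_eq0 D_gt0).
by rewrite !add0r /valency => <-.
Qed.

Lemma is_pcs_second (theta : R) s : is_pcs e theta s ->
  (bi e 1)%:R * s 2%N = k%:R * s 1%N ^+ 2 - (ci e 1)%:R.
Proof.
move=> hs; have := is_pcs_eigenvalue hs; case: hs => s0 /(_ 1%N D_gt1) /=.
rewrite s0 a_eq0 // mul0r addr0 mulr1 => hs1 theta_eq.
by apply: (addrI (ci e 1)%:R); rewrite hs1 theta_eq; ring.
Qed.

Hypothesis c1_gt0 : (0 < ci e 1)%N.

Lemma tight_first_cosines (theta theta' theta'' : R) s r :
  is_pcs e theta s -> is_pcs e theta' r -> is_pcs e theta'' (fun i => s i * r i) ->
  s 1%N ^+ 2 = 1 \/ r 1%N ^+ 2 = 1.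
Proof.
move=> /is_pcs_second hs /is_pcs_second hr /is_pcs_second /= hsr.
have b1E : (bi e 1)%:R = k%:R - (ci e 1)%:R :> R.
  by rewrite -(cb_eq_k D_gt1) natrD addrC addKr.
have ck_neq0 : (ci e 1)%:R * k%:R != 0 :> R.
  by rewrite mulf_eq0 negb_or !pnatr_eq0 -!lt0n c1_gt0 /valency b_gt0 // ltnW.
have : (ci e 1)%:R * k%:R * ((s 1%N ^+ 2 - 1) * (r 1%N ^+ 2 - 1)) = 0 :> R.
  transitivity ((k%:R * s 1%N ^+ 2 - (ci e 1)%:R) * (k%:R * r 1%N ^+ 2 - (ci e 1)%:R)
     - (bi e 1)%:R * (k%:R * (s 1%N * r 1%N) ^+ 2 - (ci e 1)%:R) :> R).
    by rewrite b1E; ring.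
  by rewrite -hs -hr -hsr; ring.
move/eqP; rewrite mulf_eq0 (negbTE ck_neq0) mulf_eq0 !subr_eq0 /=.
by case/orP => /eqP; [left | right].
Qed.

Lemma tight_pair_eq_pm_valency (theta theta' : R) : tight_pair e theta theta' ->
  (theta == k%:R) || (theta == - k%:R) || (theta' == k%:R) || (theta' == - k%:R).
Proof.
case=> s [r [hs hr [_ _ [theta'' hsr]]]].
rewrite (is_pcs_eigenvalue hs) (is_pcs_eigenvalue hr).
case: (tight_first_cosines hs hr hsr) => /eqP; rewrite sqrf_eq1 => /orP[] /eqP ->;
  by rewrite ?mulr1 ?mulrN1 eqxx ?orbT.
Qed.

End PseudoCosine.

Theorem theorem5p3 (T : finType) (e : rel T) (R : realType) :
  symmetric e -> irreflexive e -> distance_regular e ->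
  (3 <= diameter e)%N ->
  bipartite_drg e \/ almost_bipartite_drg e ->
  [/\ forall theta : R, tight_pair e theta (valency e)%:R,
      forall theta : R, tight_pair e theta (- (valency e)%:R) &
      forall theta theta' : R, tight_pair e theta theta' ->
        (theta == (valency e)%:R) || (theta == - (valency e)%:R) ||
        (theta' == (valency e)%:R) || (theta' == - (valency e)%:R)].
Proof.
move=> esym eirr [conn dr] D_ge3 bip.
have D_gt1 : (1 < diameter e)%N by apply: ltnW.
have b_gt0 := bi_gt0 esym eirr conn dr.
have a_eq0 i : (i < diameter e)%N -> ai e i = 0%N.
  by case: bip => [bip|[_ bip]] iD; apply: bip => //; apply: ltnW.
have cb_eq_k i : (i < diameter e)%N -> (ci e i + bi e i)%N = valency e.
  case: i => [|i] iD; first by rewrite [ci e 0](a_eq0 0%N iD).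
  by rewrite -(intersection_sum esym eirr conn dr (i := i.+1)) ?a_eq0 ?addn0 //= ltnW.
have c1_gt0 := ci1_gt0 conn dr (ltnW D_gt1).
split.
- exact: tight_pair_valency b_gt0 a_eq0 cb_eq_k.
- exact: tight_pair_Nvalency b_gt0 a_eq0 cb_eq_k.
- exact: tight_pair_eq_pm_valency b_gt0 a_eq0 cb_eq_k D_gt1 c1_gt0.
Qed.
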